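(* Let $n\ge 2$, $q\ge 2$ be integers and let $S\subseteq \bigcup_{i=2}^n \mathbb{Z}_q^i$ be a $q$-ary non-overlapping code. Define $\tilde S=\bigcup_{\mathbf{s}\in S}\tilde{\mathbf{s}}$, where $$\tilde{\mathbf{s}}=\{\mathbf{s}\,\|\,\mathrm{suf}(\mathbf{x},n-|\mathbf{s}|) : \mathbf{x}\in S,\ |\mathbf{x}|>n-|\mathbf{s}|\}.$$ Then $\tilde S\subseteq\mathbb{Z}_q^n$ is a fixed-length non-overlapping code of length $n$, i.e. $\mathrm{pre}(\mathbf{u}')\cap\mathrm{suf}(\mathbf{v}')=\emptyset$ for all $\mathbf{u}',\mathbf{v}'\in\tilde S$ (possibly equal).
   Context: $\mathbb{Z}_q=\{0,1,\dots,q-1\}$; words are finite strings over $\mathbb{Z}_q$, $|\mathbf{s}|$ denotes the length of $\mathbf{s}$, and $\mathbf{u}\|\mathbf{v}$ denotes concatenation. For $\mathbf{s}=(s_1,\dots,s_m)$ and $0\le k\le m$, $\mathrm{pre}(\mathbf{s},k)=(s_1,\dots,s_k)$ and $\mathrm{suf}(\mathbf{s},k)=(s_{m-k+1},\dots,s_m)$, with $\mathrm{pre}(\mathbf{s},0)$, $\mathrm{suf}(\mathbf{s},0)$ the empty string. $\mathrm{pre}(\mathbf{s})=\{\mathrm{pre}(\mathbf{s},k):1\le k\le m-1\}$ and $\mathrm{suf}(\mathbf{s})=\{\mathrm{suf}(\mathbf{s},k):1\le k\le m-1\}$. A code $S\subseteq\bigcup_{i=2}^n\mathbb{Z}_q^i$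 is non-overlapping if (1) for all $\mathbf{u},\mathbf{v}\in S$ (possibly equal), $\mathrm{pre}(\mathbf{u})\cap\mathrm{suf}(\mathbf{v})=\emptyset$, and (2) for all distinct $\mathbf{u},\mathbf{v}\in S$ with $|\mathbf{u}|\le|\mathbf{v}|$, $\mathbf{u}$ is not a (contiguous) subword of $\mathbf{v}$, i.e. $\mathbf{u}\neq(v_{j+1},\dots,v_{j+|\mathbf{u}|})$ for all $0\le j\le|\mathbf{v}|-|\mathbf{u}|$. A fixed-length code is one all of whose codewords have the same length; for it condition (2) is automatic. *)

From mathcomp Require Import all_boot.
Set Implicit Arguments. Unset Strict Implicit. Unset Printing Implicit Defensive.

Definition word (q : nat) (s : seq nat) : bool := all (fun a => a < q) s.

Definition pref (s : seq nat) (k : nat) : seq nat := take k s.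
Definition suff (s : seq nat) (k : nat) : seq nat := drop (size s - k) s.

Definition pre_suf_disjoint (u v : seq nat) : Prop :=
  forall k l, 1 <= k <= (size u).-1 -> 1 <= l <= (size v).-1 ->
    pref u k <> suff v l.

Definition subword (u v : seq nat) : Prop :=
  exists j, j <= size v - size u /\ u = take (size u) (drop j v).

Definition nonoverlapping_code (q n : nat) (S : seq nat -> Prop) : Prop :=
  (forall s, S s -> word q s /\ 2 <= size s <= n) /\
  (forall u v, S u -> S v -> pre_suf_disjoint u v) /\
  (forall u v, S u -> S v -> u <> v -> size u <= size v -> ~ subword u v).

Definition tildeS (n : nat) (S : seq nat -> Prop) (w : seq nat) : Prop :=
  exists s x, S s /\ S x /\ n - size s < size x /\ w = s ++ suff x (n - size s).

From mathcomp Require Import all_boot.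
From mathcomp Require Import zify.

Set Implicit Arguments.
Unset Strict Implicit.

(* A word of tildeS has the form t ++ b with t in S and b a proper suffix of
   some codeword y.  A prefix of a word s ++ a (s in S) matching a suffix of
   t ++ b of the same length either sits inside b, hence matches a proper
   suffix of y, or covers b, hence its initial part matches a proper suffix of
   t.  In both cases the prefix of s ++ a matches a proper suffix of a
   codeword w; if it is shorter than s this contradicts pre(s) ∩ suf(w) = ∅,
   otherwise s is a proper subword of w. *)

Lemma suff_cat (t b : seq nat) k :
  suff (t ++ b) k = if k <= size b then suff b k else suff t (k - size b) ++ b.
Proof.
rewrite /suff drop_cat size_cat.
case: ifP => [lt_k | ge_k]; case: ifP => hk; try lia.
- by rewrite (_ : size t - (k - size b) = size t + size b - k) //; lia.
- by rewrite (_ : size t + size b - k - size t = size b - k) //; lia.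
- have /size0nil -> : size t = 0 by lia.
  by rewrite /= add0n subn0 (_ : size b - k = 0) ?drop0 //; lia.
Qed.

Lemma suff_suff (x : seq nat) k m : k <= m -> suff (suff x m) k = suff x k.
Proof.
move=> le_km; rewrite /suff size_drop drop_drop.
by rewrite (_ : size x - (size x - m) - k + (size x - m) = size x - k) //; lia.
Qed.

Lemma size_suff (x : seq nat) k : k <= size x -> size (suff x k) = k.
Proof. by move=> le_k; rewrite /suff size_drop; lia. Qed.

Section NonOverlappingCode.

Variables (q n : nat) (S : seq nat -> Prop).
Hypothesis HS : nonoverlapping_code q n S.

Lemma code_prefix_neq_proper_suffix s w a m :
  S s -> S w -> 1 <= m < size w -> take m (s ++ a) <> suff w m.
Proof.
case: HS => [_ [Hdisj Hsub]] Hs Hw hm.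
case: (ltnP m (size s)) => hms.
- by rewrite take_cat hms; apply: Hdisj => //; lia.
- move=> E.
  have Es : s = take (size s) (drop (size w - m) w).
    by rewrite -[drop _ _]E take_takel // take_size_cat.
  apply: (Hsub s w Hs Hw); [move=> eq_sw; move: hms; rewrite eq_sw; lia | lia |].
  by exists (size w - m); split; [lia | exact: Es].
Qed.

Lemma tildeS_size w : tildeS n S w -> size w = n.
Proof.
case: HS => [Hword _] [s [x [Hs [_ [hx ->]]]]].
have [_ /andP[_ hs]] := Hword s Hs.
by rewrite size_cat size_suff; lia.
Qed.

Lemma tildeS_word w : tildeS n S w -> word q w.
Proof.
case: HS => [Hword _] [s [x [Hs [Hx [_ ->]]]]].
have [ws _] := Hword s Hs; have [/allP wx _] := Hword x Hx.
rewrite /word all_cat; apply/andP; split; first exact: ws.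
apply/allP => a /mem_drop; exact: wx.
Qed.

Lemma code_prefix_neq_tildeS_suffix s a v k :
  S s -> tildeS n S v -> 1 <= k < n -> take k (s ++ a) <> suff v k.
Proof.
case: HS => [Hword _] Hs [t [y [Ht [Hy [hy ->]]]]] hk.
have [_ /andP[ht hn]] := Hword t Ht.
have size_b : size (suff y (n - size t)) = n - size t by rewrite size_suff; lia.
rewrite suff_cat size_b; case: ifP => hkb.
- rewrite suff_suff //; apply: code_prefix_neq_proper_suffix => //; lia.
- set j := k - (n - size t) => E.
  have size_tj : size (suff t j) = j by rewrite size_suff; lia.
  have := congr1 (take j) E.
  rewrite take_takel; last lia.
  rewrite [X in _ = X]takel_cat ?size_tj // [X in _ = X]take_oversize ?size_tj //.
  apply: code_prefix_neq_proper_suffix => //; lia.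
Qed.

End NonOverlappingCode.

Theorem mainTheorem2 (q n : nat) (S : seq nat -> Prop) :
  2 <= n -> 2 <= q -> nonoverlapping_code q n S ->
  (forall w, tildeS n S w -> word q w /\ size w = n) /\
  (forall u v, tildeS n S u -> tildeS n S v -> pre_suf_disjoint u v).
Proof.
move=> _ _ HS; split=> [w Hw | u v Hu Hv k l hk hl E].
  by split; [exact: (tildeS_word HS) | exact: (tildeS_size HS)].
have size_u := tildeS_size HS Hu; have size_v := tildeS_size HS Hv.
have ekl : k = l.
  move: (congr1 size E); rewrite /pref /suff size_take size_drop.
  case: ifP; lia.
subst l; case: Hu E => [s [x [Hs [_ [_ ->]]]]].
apply: (code_prefix_neq_tildeS_suffix HS Hs Hv); lia.
Qed.
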